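(* Let $(X,\pi)$ be a finite symmetric two-player game with relative payoff game $(X,\Delta)$, and suppose $\Delta$ is quasiconcave with respect to a total order $\le$ on $X$. (1) If $x^*$ is a fESS of $(X,\pi)$ and $x$ is between some $y\in X$ and $x^*$, then $\Delta(x,y)=-\Delta(y,x)\ge 0$. (2) If $x^*$ and $x^{**}$ are fESS of $(X,\pi)$, then so is every $x$ between $x^*$ and $x^{**}$.
   Context: $\pi(x,y)$ is the payoff of the player choosing $x$ against $y$; $\Delta(x,y)=\pi(x,y)-\pi(y,x)$. $\Delta$ is quasiconcave (single-peaked) with respect to a total order $\le$ on the finite set $X$ if for each $y\in X$ the function $x\mapsto\Delta(x,y)$ is weakly increasing up to some $k_y\in X$ and weakly decreasing from $k_y$ on (i.e. $\Delta(x,y)\le\Delta(x',y)$ for $x\le x'\le k_y$ and $\Delta(x,y)\ge\Delta(x',y)$ for $k_y\le x\le x'$). $x$ is between $x'$ and $x''$ if $x'\le x\le x''$ or $x''\le x\le x'$. An action $x^*$ is a fESS (finite population evolutionary stable strategy) if $\pi(x^*,x)\ge\pi(x,x^* )$, equivalently $\Delta(x^*,x)\ge0$, for all $x\in X$. *)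

From mathcomp Require Import all_boot all_order all_algebra.
Set Implicit Arguments. Unset Strict Implicit. Unset Printing Implicit Defensive.
Import Order.TTheory GRing.Theory Num.Theory.
Local Open Scope ring_scope.

Definition rel_payoff (X : Type) (R : realDomainType) (pi : X -> X -> R)
  (x y : X) : R := pi x y - pi y x.

Definition quasiconcave_rel (d : Order.disp_t) (X : orderType d)
  (R : realDomainType) (Delta : X -> X -> R) : Prop :=
  forall y : X, exists k : X,
    (forall x x' : X, (x <= x')%O -> (x' <= k)%O -> Delta x y <= Delta x' y) /\
    (forall x x' : X, (k <= x)%O -> (x <= x')%O -> Delta x y >= Delta x' y).

Definition between (d : Order.disp_t) (X : orderType d) (x x' x'' : X) : Prop :=
  ((x' <= x)%O && (x <= x'')%O) \/ ((x'' <= x)%O && (x <= x')%O).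

Definition fESS (X : Type) (R : realDomainType) (pi : X -> X -> R) (xs : X)
  : Prop := forall x : X, pi xs x >= pi x xs.

(* For fixed y, the set of x with Delta(x, y) >= 0 is convex in the order of X,
   because a single-peaked function stays above any value it takes at two points
   on the whole interval between them. Part (1) applies this with the endpoints
   y (where Delta(y, y) = 0) and x* (where Delta(x*, y) >= 0 as x* is a fESS);
   part (2) with the two fESS x* and x**, for every opponent y. *)

From mathcomp Require Import all_boot all_order all_algebra.
Import Order.TTheory GRing.Theory Num.Theory.
Local Open Scope ring_scope.
Set Implicit Arguments.
Unset Strict Implicit.

Section QuasiconcaveBetween.

Variables (d : Order.disp_t) (X : orderType d) (R : realDomainType).
Variables (D : X -> X -> R) (y : X).
Hypothesis D_qc : quasiconcave_rel D.

Lemma quasiconcave_ge0_itv (a b x : X) :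
  0 <= D a y -> 0 <= D b y -> (a <= x)%O -> (x <= b)%O -> 0 <= D x y.
Proof.
move=> Da Db ax xb; have [k [incr decr]] := D_qc y.
case: (leP x k) => [xk | /ltW kx].
- exact: le_trans Da (incr _ _ ax xk).
- exact: le_trans Db (decr _ _ kx xb).
Qed.

Lemma quasiconcave_ge0_between (a b x : X) :
  0 <= D a y -> 0 <= D b y -> between x a b -> 0 <= D x y.
Proof.
move=> Da Db [/andP[ax xb] | /andP[bx xa]].
- exact: quasiconcave_ge0_itv Da Db ax xb.
- exact: quasiconcave_ge0_itv Db Da bx xa.
Qed.

End QuasiconcaveBetween.

Section RelativePayoff.

Variables (X : Type) (R : realDomainType) (pi : X -> X -> R).

Lemma rel_payoffNC (x y : X) : rel_payoff pi x y = - rel_payoff pi y x.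
Proof. by rewrite /rel_payoff opprB. Qed.

Lemma rel_payoffxx (x : X) : rel_payoff pi x x = 0.
Proof. exact: subrr. Qed.

Lemma fESSP (xs : X) : fESS pi xs <-> forall y, 0 <= rel_payoff pi xs y.
Proof. by split=> E y; have := E y; rewrite /rel_payoff subr_ge0. Qed.

End RelativePayoff.

Theorem lemma5 (d : Order.disp_t) (X : finOrderType d) (R : realDomainType)
  (pi : X -> X -> R) :
  quasiconcave_rel (rel_payoff pi) ->
  (forall xs y x : X, fESS pi xs -> between x y xs ->
     rel_payoff pi x y = - rel_payoff pi y x /\ 0 <= rel_payoff pi x y) /\
  (forall xs xss x : X, fESS pi xs -> fESS pi xss -> between x xs xss ->
     fESS pi x).
Proof.
move=> Q; split.
- move=> xs y x /fESSP E B; split; first exact: rel_payoffNC.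
  by apply: (quasiconcave_ge0_between Q _ (E y) B); rewrite rel_payoffxx.
- move=> xs xss x /fESSP E1 /fESSP E2 B; apply/fESSP => y.
  exact: (quasiconcave_ge0_between Q (E1 y) (E2 y) B).
Qed.
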